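(* Let $\lambda_a,\lambda_b\in\{1,2\}$ and let $u_1,t,u_2$ be integers such that $(u_1,t)$ satisfies $S_{\lambda_a,\lambda_b}$ and $u_1u_2=t^3+t^{\lambda_a}+1$. If $v$ is a divisor of $u_1u_2$ and $t\mid (u_1-v)$, then $(v,t)$ satisfies $S_{\lambda_a,\lambda_b}$, i.e. there is a 4-chain $\langle v,t\rangle_{S_{\lambda_a,\lambda_b}}$ (in which $v,t,u_1u_2/v$ are consecutive terms).
   Context: For $\lambda_a,\lambda_b\in\{1,2\}$, a pair of integers $(x,y)$ satisfies the system $S_{\lambda_a,\lambda_b}$ if $x\mid y^3+y^{\lambda_a}+1$ and $y\mid x^3+x^{\lambda_b}+1$. For a pair $(x,y)$ satisfying $S_{\lambda_a,\lambda_b}$, $\langle x,y\rangle_{S_{\lambda_a,\lambda_b}}$ denotes the bi-infinite integer sequence $(u_n)$ with $u_0=x$, $u_1=y$ and $u_{n-1}u_{n+1}=u_n^3+u_n^{e_n}+1$ for all $n$, where $e_n$ has period 4 with $e_0=\lambda_b$, $e_1=\lambda_a$, $e_2=3-\lambda_b$, $e_3=3-\lambda_a$. *)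

From Stdlib Require Import ZArith.
Open Scope Z_scope.

Definition satisfiesS (la lb : Z) (x y : Z) : Prop :=
  (x | y ^ 3 + y ^ la + 1) /\ (y | x ^ 3 + x ^ lb + 1).

(* Only the congruence [v = u1 (mod t)] matters: every polynomial with integer
   coefficients preserves congruences, so [t] divides [v^3 + v^lb + 1] because
   it divides [u1^3 + u1^lb + 1]; and [v] divides [t^3 + t^la + 1 = u1 u2] by
   hypothesis. Nothing depends on the exponents being 1 or 2. *)
From Stdlib Require Import ZArith.
Open Scope Z_scope.

Lemma Zdivide_sub_pow (t a b n : Z) :
  (t | a - b) -> (t | a ^ n - b ^ n).
Proof.
  intros Hab.
  destruct (Z.neg_nonneg_cases n) as [Hn | Hn].
  - rewrite !Z.pow_neg_r by exact Hn. apply Z.divide_0_r.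
  - pattern n; apply natlike_ind; [| | exact Hn].
    + rewrite !Z.pow_0_r. apply Z.divide_0_r.
    + intros m Hm IH.
      rewrite !Z.pow_succ_r by exact Hm.
      replace (a * a ^ m - b * b ^ m)
        with ((a - b) * a ^ m + b * (a ^ m - b ^ m)) by ring.
      apply Z.divide_add_r.
      * apply Z.divide_mul_l; exact Hab.
      * apply Z.divide_mul_r; exact IH.
Qed.

Lemma Zdivide_sub_cubic (t l a b : Z) :
  (t | a - b) -> (t | (a ^ 3 + a ^ l + 1) - (b ^ 3 + b ^ l + 1)).
Proof.
  intros Hab.
  replace ((a ^ 3 + a ^ l + 1) - (b ^ 3 + b ^ l + 1))
    with ((a ^ 3 - b ^ 3) + (a ^ l - b ^ l)) by ring.
  apply Z.divide_add_r; apply Zdivide_sub_pow; exact Hab.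
Qed.

Lemma Zdivide_cubic_congr (t l a b : Z) :
  (t | a - b) -> (t | a ^ 3 + a ^ l + 1) -> (t | b ^ 3 + b ^ l + 1).
Proof.
  intros Hab Ha.
  replace (b ^ 3 + b ^ l + 1)
    with ((a ^ 3 + a ^ l + 1) - ((a ^ 3 + a ^ l + 1) - (b ^ 3 + b ^ l + 1)))
    by ring.
  apply Z.divide_sub_r; [exact Ha | apply Zdivide_sub_cubic; exact Hab].
Qed.

Theorem corollary9 (la lb u1 t u2 v : Z)
  (hla : la = 1 \/ la = 2) (hlb : lb = 1 \/ lb = 2)
  (hS : satisfiesS la lb u1 t)
  (hprod : u1 * u2 = t ^ 3 + t ^ la + 1)
  (hv : (v | u1 * u2))
  (ht : (t | u1 - v)) :
  satisfiesS la lb v t.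
Proof.
  destruct hS as [_ Ht].
  split.
  - rewrite <- hprod; exact hv.
  - exact (Zdivide_cubic_congr t lb u1 v ht Ht).
Qed.
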